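(* For all $\Delta,\Delta',D,D'\in\mathcal D_n^+$, $$d_s(\Delta+D,\Delta'+D')\le\max\big(d_s(\Delta,\Delta'),d_s(D,D')\big).$$
   Context: $\mathcal D_n^+$ is the set of $n\times n$ diagonal matrices with positive diagonal entries, and $d_s(\Delta,\Delta')=\max_i\frac{|\Delta_i-\Delta'_i|}{\sqrt{\Delta_i\Delta'_i}}$. *)

From mathcomp Require Import all_boot all_order all_algebra.
Set Implicit Arguments. Unset Strict Implicit. Unset Printing Implicit Defensive.
Import Order.TTheory GRing.Theory Num.Theory.
Local Open Scope ring_scope.

Definition posdiag (R : rcfType) (n : nat) (A : 'M[R]_n) : Prop :=
  is_diag_mx A /\ (forall i : 'I_n, 0 < A i i).

Definition d_s (R : rcfType) (n : nat) (A B : 'M[R]_n) : R :=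
  \big[Num.max/0]_(i < n) (`|A i i - B i i| / Num.sqrt (A i i * B i i)).

From mathcomp Require Import all_boot all_order all_algebra.
From mathcomp Require Import ring lra.
Set Implicit Arguments. Unset Strict Implicit. Unset Printing Implicit Defensive.
Import Order.TTheory GRing.Theory Num.Theory.
Local Open Scope ring_scope.

(* Entrywise, with r = reldist a a', s = reldist b b' and m = max r s,
   |(a + b) - (a' + b')| <= r sqrt(a a') + s sqrt(b b') <= m (sqrt(a a') + sqrt(b b')),
   and by Cauchy-Schwarz sqrt(a a') + sqrt(b b') <= sqrt((a + b)(a' + b')).
   Taking maxima over the diagonal gives the bound for d_s. *)

Definition reldist (R : rcfType) (a b : R) : R := `|a - b| / Num.sqrt (a * b).

Lemma reldist_ge0 (R : rcfType) (a b : R) : 0 <= reldist a b.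
Proof. by rewrite divr_ge0 ?sqrtr_ge0. Qed.

Lemma sqrtrM_addr_le (R : rcfType) (a a' b b' : R) :
  0 <= a -> 0 <= a' -> 0 <= b -> 0 <= b' ->
  Num.sqrt (a * a') + Num.sqrt (b * b') <= Num.sqrt ((a + b) * (a' + b')).
Proof.
move=> ha ha' hb hb'.
suff cauchy_schwarz (x x' y y' : R) : 0 <= x -> 0 <= x' -> 0 <= y -> 0 <= y' ->
    x * x' + y * y' <= Num.sqrt ((x ^+ 2 + y ^+ 2) * (x' ^+ 2 + y' ^+ 2)).
  by have := cauchy_schwarz _ _ _ _ (sqrtr_ge0 a) (sqrtr_ge0 a') (sqrtr_ge0 b)
    (sqrtr_ge0 b'); rewrite !sqr_sqrtr // (sqrtrM a') // (sqrtrM b').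
move=> hx hx' hy hy'.
have sqr_le : (x * x' + y * y') ^+ 2 <= (x ^+ 2 + y ^+ 2) * (x' ^+ 2 + y' ^+ 2).
  have := sqr_ge0 (x * y' - y * x'); nra.
by rewrite -(ger0_norm (_ : 0 <= x * x' + y * y')) ?addr_ge0 ?mulr_ge0 //
  -sqrtr_sqr ler_wsqrtr.
Qed.

Lemma reldistD_le_max (R : rcfType) (a a' b b' : R) :
  0 < a -> 0 < a' -> 0 < b -> 0 < b' ->
  reldist (a + b) (a' + b') <= Num.max (reldist a a') (reldist b b').
Proof.
move=> ha ha' hb hb'; set m := Num.max _ _.
have le_m1 : reldist a a' <= m by rewrite /m le_max lexx.
have le_m2 : reldist b b' <= m by rewrite /m le_max lexx orbT.
have m_ge0 : 0 <= m := le_trans (reldist_ge0 a a') le_m1.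
have le_m_dist (c c' : R) : 0 < c -> 0 < c' -> reldist c c' <= m ->
    `|c - c'| <= m * Num.sqrt (c * c').
  by move=> hc hc'; rewrite -ler_pdivrMr ?sqrtr_gt0 ?mulr_gt0.
rewrite /reldist ler_pdivrMr ?sqrtr_gt0 ?mulr_gt0 ?addr_gt0 //.
rewrite (_ : a + b - (a' + b') = (a - a') + (b - b')); last by ring.
apply: le_trans (ler_normD _ _) _.
apply: le_trans (_ : m * Num.sqrt (a * a') + m * Num.sqrt (b * b') <= _).
  by rewrite lerD ?le_m_dist.
by rewrite -mulrDr; apply: ler_wpM2l => //; apply: sqrtrM_addr_le; apply: ltW.
Qed.

Section DiagonalDistance.

Variables (R : rcfType) (n : nat).
Implicit Types A B : 'M[R]_n.

Lemma d_sE A B : d_s A B = \big[Num.max/0]_(i < n) reldist (A i i) (B i i).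
Proof. by []. Qed.

Lemma d_s_ge0 A B : 0 <= d_s A B.
Proof.
rewrite d_sE; elim/big_ind: _ => // [x y hx hy|i _]; last exact: reldist_ge0.
by rewrite le_max hx.
Qed.

Lemma reldist_le_d_s A B i : reldist (A i i) (B i i) <= d_s A B.
Proof. by rewrite d_sE (le_bigmax _ (fun j => reldist (A j j) (B j j))). Qed.

Lemma d_s_le A B c :
  0 <= c -> (forall i, reldist (A i i) (B i i) <= c) -> d_s A B <= c.
Proof. by move=> c_ge0 le_c; rewrite d_sE; apply: bigmax_le. Qed.

End DiagonalDistance.

Theorem mainTheorem5 (R : rcfType) (n : nat) (Dl Dl' D D' : 'M[R]_n) :
  posdiag Dl -> posdiag Dl' -> posdiag D -> posdiag D' ->
  d_s (Dl + D) (Dl' + D') <= Num.max (d_s Dl Dl') (d_s D D').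
Proof.
move=> [_ pos_Dl] [_ pos_Dl'] [_ pos_D] [_ pos_D'].
apply: d_s_le => [|i]; first by rewrite le_max d_s_ge0.
rewrite !mxE; apply: le_trans (reldistD_le_max (pos_Dl i) (pos_Dl' i) (pos_D i) (pos_D' i)) _.
by rewrite ge_max !le_max !reldist_le_d_s ?orbT.
Qed.
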